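(* Let $n\ge1$, let $R,H\subseteq\{0,1,\dots,n-1\}$, $S_1=\{a^{2r},\ a^{2r}b,\ a^{-2r}b^2\mid r\in R\}$ and $S_2=\{a^{2h+1},\ a^{2h+1}b,\ a^{2h+1}b^2\mid h\in H\}$, such that $S=S_1\cup S_2\subseteq U_{6n}$ satisfies $1\notin S=S^{-1}$. Put $S_R=\{a^{2r}\mid r\in R\}$ and $S_H=\{a^{2h+1}\mid h\in H\}$. Then $\mathrm{Cay}(U_{6n},S)$ is integral if and only if both of the following hold: (1) $S_R\cup S_H\in B(\langle a\rangle)$; (2) $2\psi_k(S_2^2)$ is a perfect square (the square of an integer) for every $0\le k\le n-1$.
   Context: For an integer $n\ge1$, $U_{6n}=\langle a,b\mid a^{2n}=b^3=1,\ a^{-1}ba=b^{-1}\rangle$, a group of order $6n$ whose elements are uniquely $a^ib^\epsilon$ with $0\le i\le 2n-1$, $\epsilon\in\{0,1,2\}$; $\langle a\rangle$ is cyclic of order $2n$. Let $\omega=\exp(\pi\imath/n)$. The degree-two irreducible characters $\psi_k$ ($0\le k\le n-1$) of $U_{6n}$ are given by $\psi_k(a^{2r})=2\omega^{2kr}$, $\psi_k(a^{2r}b)=\psi_k(a^{2r}b^2)=-\omega^{2kr}$, $\psi_k(a^{2r+1}b^\epsilon)=0$. For a character $\chi$ and a subset $A$, $\chi(A^2)=\sum_{x_1,x_2\in A}\chi(x_1x_2)$ over all ordered pairs. For a finite group $G$, the Boolean algebra $B(G)$ is the collection of subsets of $G$ obtainable from the subgroups of $G$ by finitely many unions, intersections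 and complements (in $G$). For a group $G$ and $S\subseteq G$ with $1\notin S=S^{-1}$, the Cayley graph $\mathrm{Cay}(G,S)$ has vertex set $G$ and edges $\{g,sg\}$ for $g\in G,s\in S$. A graph is integral if all eigenvalues of its adjacency matrix are integers. *)

From HB Require Import structures.
From mathcomp Require Import all_boot all_order all_algebra all_fingroup all_field all_character.
Set Implicit Arguments. Unset Strict Implicit. Unset Printing Implicit Defensive.
Import Order.TTheory GRing.Theory Num.Theory.

(* The group U_{6n} = < a, b | a^{2n} = b^3 = 1, a^-1 b a = b^-1 >,         *)
(* realised concretely on pairs (i, e) in Z_{2n} x Z_3 standing for a^i b^e *)
(* with  (a^i b^e)(a^j b^f) = a^(i+j) b^((-1)^j e + f).                      *)

Definition U6 (n : nat) : Type := ('Z_(n.*2) * 'Z_3)%type.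

HB.instance Definition _ n := Finite.on (U6 n).

Section U6Group.
Variable n : nat.
Local Open Scope ring_scope.

Definition U6sg (j : 'Z_(n.*2)) (e : 'Z_3) : 'Z_3 :=
  if odd (val j) then - e else e.

Definition U6mul (x y : U6 n) : U6 n := (x.1 + y.1, U6sg y.1 x.2 + y.2).
Definition U6one : U6 n := (0, 0).
Definition U6inv (x : U6 n) : U6 n := (- x.1, - U6sg x.1 x.2).

Lemma U6_mod_even : odd (Zp_trunc (n.*2)).+2 = false.
Proof. by rewrite /Zp_trunc; case: n => [|m] //=; rewrite odd_double. Qed.

Lemma U6_oddD (j k : 'Z_(n.*2)) : odd (val (j + k)) = odd (val j) (+) odd (val k).
Proof. by rewrite /= odd_mod ?U6_mod_even // oddD. Qed.

Lemma U6sgD j k e : U6sg (j + k) e = U6sg k (U6sg j e).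
Proof.
rewrite /U6sg U6_oddD.
by case: (odd (val j)); case: (odd (val k)) => //=; rewrite opprK.
Qed.

Lemma U6sgDe j e f : U6sg j (e + f) = U6sg j e + U6sg j f.
Proof. by rewrite /U6sg; case: ifP => // _; rewrite opprD. Qed.

Lemma U6mulA : associative U6mul.
Proof.
move=> [i e] [j f] [k g]; rewrite /U6mul /=.
by rewrite addrA U6sgDe U6sgD addrA.
Qed.

Lemma U6mul1 : left_id U6one U6mul.
Proof.
move=> [i e]; rewrite /U6mul /U6one /= add0r.
by rewrite /U6sg; case: ifP; rewrite ?oppr0 add0r.
Qed.

Lemma U6mulV : left_inverse U6one U6inv U6mul.
Proof.
move=> [i e]; rewrite /U6mul /U6inv /U6one /= addNr.
by rewrite /U6sg; case: (odd (val i)); rewrite ?opprK ?addrN ?addNr.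
Qed.

HB.instance Definition _ := Finite_isGroup.Build (U6 n) U6mulA U6mul1 U6mulV.

End U6Group.

Definition U6a (n : nat) : U6 n := (1%R, 0%R).
Definition U6b (n : nat) : U6 n := (0%R, 1%R).

Local Open Scope ring_scope.

Inductive inB {gT : finGroupType} (G : {set gT}) : {set gT} -> Prop :=
  | inB_subgroup (K : {group gT}) : K \subset G -> inB G K
  | inB_union A B : inB G A -> inB G B -> inB G (A :|: B)
  | inB_inter A B : inB G A -> inB G B -> inB G (A :&: B)
  | inB_compl A : inB G A -> inB G (G :\: A).

Definition cayley_adj {gT : finGroupType} (S : {set gT}) : 'M[algC]_(#|gT|) :=
  \matrix_(i, j) ((enum_val j * (enum_val i)^-1)%g \in S)%:R.

Definition integral_graph {m : nat} (A : 'M[algC]_m) : Prop :=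
  forall x : algC, eigenvalue A x -> x \in Num.int.

(* omega = exp(pi i / n): the primitive 2n-th root of unity with minimal    *)
(* positive argument, i.e. n.-root (-1) in algC.                            *)
Definition U6omega (n : nat) : algC := n.-root (-1).

Definition U6psi (n k : nat) (x : U6 n) : algC :=
  let i := val x.1 in
  if odd i then 0
  else if x.2 == 0%R then 2 * U6omega n ^+ (2 * k * i./2)
  else - U6omega n ^+ (2 * k * i./2).

Definition char_sq {gT : finGroupType} (chi : gT -> algC) (A : {set gT}) : algC :=
  \sum_(x1 in A) \sum_(x2 in A) chi (x1 * x2)%g.

From HB Require Import structures.
From mathcomp Require Import all_boot all_order all_algebra all_fingroup all_field all_character.
From mathcomp Require Import cyclic ring.
Set Implicit Arguments. Unset Strict Implicit. Unset Printing Implicit Defensive.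
Import Order.TTheory GRing.Theory Num.Theory.

(* The adjacency operator of Cay(U_6n, S) commutes with the right translations,
   and membership in S depends only on the exponent of a (inverse-closure makes
   the even exponents symmetric), so its eigenvalues are 0 and the numbers
   3 * sum_(x in SR :|: SH) zeta^(j x), zeta a primitive 2n-th root of unity.
   For a faithful linear character of <a>, these power sums are all rational iff
   SR :|: SH is a union of classes {g | <[g]> = <[x]>}: the Galois automorphisms
   zeta |-> zeta^m permute each class, and Fourier inversion recovers the set
   from its power sums. On such unions the power sums are integers, and such
   unions are exactly the members of B(<a>). Condition (2) is automatic: psi_k
   sums to 0 over each coset of <b>, and S2 is a union of such cosets. *)

Local Open Scope ring_scope.

Section CycleClosedSets.
Variable gT : finGroupType.
Implicit Types (x y g : gT) (X : {set gT}).

Definition cycle_class x : {set gT} := [set g | <[g]>%g == <[x]>%g].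

Definition cycle_closed X := forall x y, x \in X -> <[x]>%g = <[y]>%g -> y \in X.

Lemma cycle_class_id x : x \in cycle_class x.
Proof. by rewrite inE. Qed.

Lemma cycle_class_sub x : cycle_class x \subset <[x]>%g.
Proof. by apply/subsetP => g; rewrite inE => /eqP <-; exact: cycle_id. Qed.

Lemma cycle_closed_bigcup X :
  cycle_closed X -> X = \bigcup_(x in X) cycle_class x.
Proof.
move=> cX; apply/setP => g; apply/idP/bigcupP => [gX | [x xX]].
  by exists g; rewrite ?cycle_class_id.
by rewrite inE => /eqP gx; exact: cX _ _ xX (esym gx).
Qed.

Lemma cycle_classE x :
  cycle_class x = <[x]>%g :\: \bigcup_(y in <[x]>%g | <[y]>%g != <[x]>%g) <[y]>%g.
Proof.
apply/setP => g; rewrite !inE; apply/eqP/andP => [gx | [ng gx]].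
  have gX : g \in <[x]>%g by rewrite -gx cycle_id.
  split=> //; apply/bigcupP => -[y /andP[yx /negP ne] gy]; apply: ne.
  by rewrite eqEsubset !cycle_subG yx -cycle_subG -gx cycle_subG.
apply/eqP; apply: contraNT ng => ne; apply/bigcupP; exists g; rewrite ?cycle_id //.
by rewrite gx.
Qed.

Variable G : {group gT}.

Lemma inB_cycle_closed X : inB G X -> X \subset G /\ cycle_closed X.
Proof.
elim=> [K sKG | A B _ [sAG cA] _ [sBG cB] | A B _ [sAG cA] _ [sBG cB] | A _ [sAG cA]].
- by split=> // x y xK xy; rewrite -cycle_subG -xy cycle_subG.
- split=> [|x y]; first by rewrite subUset sAG.
  by rewrite !inE => /orP[/cA yA | /cB yB] /[dup] xy; [move/yA -> | move/yB ->];
    rewrite ?orbT.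
- split=> [|x y]; first by rewrite subIset ?sAG.
  by rewrite !inE => /andP[/cA yA /cB yB] xy; rewrite yA ?yB.
- split=> [|x y]; first exact: subsetDl.
  rewrite !inE => /andP[xA xG] xy.
  rewrite -cycle_subG -xy cycle_subG xG andbT.
  by apply: contra xA => yA; exact: cA _ _ yA (esym xy).
Qed.

Lemma inB_set0 : inB G set0.
Proof. by have := inB_compl (inB_subgroup (subxx G)); rewrite setDv. Qed.

Lemma inB_setD A B : inB G A -> inB G B -> inB G (A :\: B).
Proof.
move=> inBA inBB; have [sAG _] := inB_cycle_closed inBA.
suff -> : A :\: B = A :&: (G :\: B) by apply: inB_inter; last exact: inB_compl.
by rewrite setDE setIDA (setIidPl sAG) setDE.
Qed.

Lemma inB_bigcup (I : finType) (P : pred I) (F : I -> {set gT}) :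
  (forall i, P i -> inB G (F i)) -> inB G (\bigcup_(i | P i) F i).
Proof.
move=> inBF; apply: (big_ind (inB G)) => //; first exact: inB_set0.
exact: inB_union.
Qed.

Lemma inB_cycle_class x : x \in G -> inB G (cycle_class x).
Proof.
move=> xG; rewrite cycle_classE; apply: inB_setD.
  by apply: inB_subgroup; rewrite cycle_subG.
apply: inB_bigcup => y /andP[yx _]; apply: inB_subgroup.
by rewrite cycle_subG (subsetP _ _ yx) ?cycle_subG.
Qed.

Lemma inBP X : inB G X <-> X \subset G /\ cycle_closed X.
Proof.
split=> [|[sXG cX]]; first exact: inB_cycle_closed.
rewrite (cycle_closed_bigcup cX); apply: inB_bigcup => x xX.
exact/inB_cycle_class/(subsetP sXG).
Qed.

End CycleClosedSets.

Lemma sum_expr_unity (z : algC) m :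
  z ^+ m = 1 -> \sum_(i < m) z ^+ i = if z == 1 then m%:R else 0.
Proof.
move=> zm1; case: eqP => [-> | /eqP z1].
  by rewrite (eq_bigr (fun=> 1)) ?sumr_const ?card_ord // => i _; rewrite expr1n.
have := subrX1 z m; rewrite zm1 subrr => /esym/eqP.
by rewrite mulf_eq0 subr_eq0 (negPf z1) => /eqP.
Qed.

Lemma sum_enum_val (T : finType) (F : T -> algC) :
  \sum_(k < #|{: T}|) F (enum_val k) = \sum_x F x.
Proof. by rewrite -big_enum_val; apply: eq_bigl. Qed.

Section LinearCharacterPowerSums.
Variables (gT : finGroupType) (chi : gT -> algC).
Hypothesis chiM : {morph chi : x y / (x * y)%g >-> x * y}.
Hypothesis chi1 : chi 1%g = 1.
Implicit Types (x y g : gT) (X : {set gT}).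

Lemma chiX x k : chi (x ^+ k)%g = chi x ^+ k.
Proof. by elim: k => [|k IHk]; rewrite ?chi1 // expgS chiM IHk exprS. Qed.

Definition power_sum X (j : nat) := \sum_(x in X) chi x ^+ j.

Lemma power_sum_cycle_int x j : power_sum <[x]>%g j \in Num.int.
Proof.
have translate : chi x ^+ j * power_sum <[x]>%g j = power_sum <[x]>%g j.
  rewrite /power_sum mulr_sumr [RHS](reindex_inj (mulgI x)) /=.
  apply: eq_big => [g | g _]; first by rewrite groupMl ?cycle_id.
  by rewrite chiM exprMn.
have [chi_xj1 | chi_xj_neq1] := eqVneq (chi x ^+ j) 1.
  rewrite /power_sum (eq_bigr (fun=> 1)) ?sumr_const ?rpred_nat //.
  by move=> g /cycleP[i ->]; rewrite chiX exprAC chi_xj1 expr1n.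
move/eqP: translate; rewrite -subr_eq0 -{2}[power_sum _ _]mul1r -mulrBl.
by rewrite mulf_eq0 subr_eq0 (negPf chi_xj_neq1) => /eqP ->; exact: rpred0.
Qed.

Lemma sum_cycle_closed_int X (F : gT -> algC) : cycle_closed X ->
    (forall x, x \in X -> \sum_(g in cycle_class x) F g \in Num.int) ->
  \sum_(g in X) F g \in Num.int.
Proof.
move=> cX classF; rewrite (partition_big_imset (fun g => <[g]>%g)) /=.
apply: rpred_sum => _ /imsetP[x xX ->].
rewrite (eq_bigl (mem (cycle_class x))) ?classF // => g /=.
rewrite inE; apply/andP/idP => [[] // | /eqP gx]; rewrite gx.
by split; first exact: cX xX (esym gx).
Qed.

Lemma cycle_closed_cycleD_class x : cycle_closed (<[x]>%g :\: cycle_class x).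
Proof.
move=> y z; rewrite !inE => /andP[y_gen yx] yz.
by rewrite -yz y_gen /= -cycle_subG -yz cycle_subG.
Qed.

Lemma power_sum_cycle_class_int x j : power_sum (cycle_class x) j \in Num.int.
Proof.
move: {2}#[x]%g (leqnn #[x]%g) => k; elim: k x => [|k IHk] x le_x_k.
  by rewrite leqNgt order_gt0 in le_x_k.
have -> : power_sum (cycle_class x) j =
          power_sum <[x]>%g j - power_sum (<[x]>%g :\: cycle_class x) j.
  rewrite /power_sum [in RHS](big_setID (cycle_class x)).
  by rewrite (setIidPr (cycle_class_sub x)) addrK.
suff : power_sum (<[x]>%g :\: cycle_class x) j \in Num.int.
  by apply: rpredB; exact: power_sum_cycle_int.
apply: (sum_cycle_closed_int (F := fun g => chi g ^+ j) (@cycle_closed_cycleD_class x)).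
move=> y; rewrite !inE => /andP[y_gen yx]; apply: IHk.
rewrite -ltnS (leq_trans _ le_x_k) //.
by apply: proper_card; rewrite properEneq y_gen cycle_subG.
Qed.

Lemma power_sum_int X j : cycle_closed X -> power_sum X j \in Num.int.
Proof.
by move=> cX; apply: (sum_cycle_closed_int (F := fun g => chi g ^+ j) cX) => x _;
  exact: power_sum_cycle_class_int.
Qed.

Variable G : {group gT}.
Hypothesis chi_faithful : {in G, forall x, (chi x == 1) = (x == 1%g)}.

Lemma power_sum_inversion X g : X \subset G -> g \in G ->
  \sum_(j < #|G|) power_sum X j * chi g^-1 ^+ j = #|G|%:R * (g \in X)%:R.
Proof.
move=> sXG gG; rewrite /power_sum; under eq_bigr do rewrite mulr_suml.
have orthogonality x : x \in X ->
    \sum_(j < #|G|) chi x ^+ j * chi g^-1 ^+ j = if x == g then #|G|%:R else 0.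
  move=> xX; have xgG : (x * g^-1)%g \in G by rewrite groupM ?groupV // (subsetP sXG).
  under eq_bigr do rewrite -exprMn -chiM.
  rewrite sum_expr_unity; last by rewrite -chiX (expg_cardG xgG) chi1.
  by rewrite chi_faithful // -(inj_eq (mulIg g)) mulgKV mul1g.
rewrite exchange_big /= (eq_bigr _ orthogonality).
have [gX | gNX] := boolP (g \in X).
  by rewrite (bigD1 g gX) /= eqxx mulr1 big1 ?addr0 // => x /andP[_ /negPf ->].
by rewrite mulr0 big1 // => x xX; case: eqP => // xg; rewrite -xg xX in gNX.
Qed.

(* A Galois automorphism sending chi x to chi (x ^+ m) fixes the rational power
   sums, so by Fourier inversion it cannot separate x from x ^+ m. *)
Lemma power_sum_rat_cycle_closed X :
  X \subset G -> (forall j, power_sum X j \in Crat) -> cycle_closed X.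
Proof.
move=> sXG ratX x y xX xy; have xG := subsetP sXG _ xX.
have yG : y \in G by rewrite -cycle_subG -xy cycle_subG.
have /cycleP[m def_y] : y \in <[x]>%g by rewrite xy cycle_id.
have m_coprime : coprime m #[x]%g.
  by rewrite coprime_sym -generator_coprime -def_y /generator xy.
have [u uE] := Qn_aut_exists m_coprime.
have u_chi : u (chi x^-1) = chi y^-1.
  rewrite uE; first by rewrite def_y -expVgn chiX.
  by rewrite -chiX expVgn expg_order invg1 chi1.
have := power_sum_inversion sXG yG; rewrite -u_chi.
under eq_bigr do rewrite -rmorphXn -(aut_Crat u (ratX _)) -rmorphM.
rewrite -rmorph_sum power_sum_inversion // rmorphM !rmorph_nat xX.
move/(mulfI _); rewrite pnatr_eq0 -lt0n cardG_gt0 => /(_ isT).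
by case: (y \in X) => //= /eqP; rewrite oner_eq0.
Qed.

End LinearCharacterPowerSums.

Section U6Arithmetic.
Variable n : nat.
Local Notation Zn := 'Z_(n.*2).
Local Notation a := (U6a n).
Local Notation b := (U6b n).

Lemma U6sg0 (j : Zn) : U6sg j 0 = 0.
Proof. by rewrite /U6sg; case: ifP; rewrite ?oppr0. Qed.

Lemma U6_expa k : (a ^+ k)%g = (k%:R, 0).
Proof.
elim: k => // k IHk; rewrite expgS IHk.
change (@U6mul n (1, 0) (k%:R, 0) = (k.+1%:R, 0)).
by rewrite /U6mul /= U6sg0 addr0 mulrS.
Qed.

Lemma U6_expa_b k : (a ^+ k * b)%g = (k%:R, 1).
Proof.
rewrite U6_expa; change (@U6mul n (k%:R, 0) (0, 1) = (k%:R, 1)).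
by rewrite /U6mul /= addr0 add0r.
Qed.

Lemma U6_expa_b2 k : (a ^+ k * b ^+ 2)%g = (k%:R, 1 + 1).
Proof.
rewrite U6_expa expgS expg1.
change (@U6mul n (k%:R, 0) (U6mul (0, 1) (0, 1)) = (k%:R, 1 + 1)).
by rewrite /U6mul /= !addr0 add0r.
Qed.

Lemma U6_expVa_b2 k : (a ^- k * b ^+ 2)%g = (- k%:R, 1 + 1).
Proof.
rewrite U6_expa expgS expg1.
change (@U6mul n (U6inv (k%:R, 0)) (U6mul (0, 1) (0, 1)) = (- k%:R, 1 + 1)).
by rewrite /U6mul /U6inv /= U6sg0 oppr0 !addr0 add0r.
Qed.

Lemma sum_U6 (F : U6 n -> algC) :
  \sum_g F g = \sum_(i : Zn) \sum_(e : 'Z_3) F (i, e).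
Proof. by rewrite pair_bigA; apply: eq_bigr => -[]. Qed.

Lemma sum_U6_fst (f : Zn -> algC) : \sum_(g : U6 n) f g.1 = 3%:R * \sum_(i : Zn) f i.
Proof.
rewrite sum_U6 mulr_sumr; apply: eq_bigr => i _.
by rewrite /= big_const_ord iter_addr_0 mulr_natl.
Qed.

Lemma U6_cycle_a g : g \in <[a]>%g -> g.2 = 0.
Proof. by case/cycleP => k ->; rewrite U6_expa. Qed.

Lemma odd_Zp_nat k : odd (val (k%:R : Zn)) = odd k.
Proof. by rewrite Zp_nat /= odd_mod ?U6_mod_even. Qed.

Lemma odd_ZpN (i : Zn) : odd (val (- i)) = odd (val i).
Proof. by have := U6_oddD i (- i); rewrite addrN /=; case: (odd (val i)); case: (odd _). Qed.

Lemma Z3_cases (e : 'Z_3) : [\/ e = 0, e = 1 | e = 1 + 1].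
Proof.
by case: e => [[|[|[|m]]] lt_e3] //; [apply: Or31 | apply: Or32 | apply: Or33]; apply: val_inj.
Qed.

End U6Arithmetic.

Section U6LinearCharacter.
Variable n : nat.
Local Notation Zn := 'Z_(n.*2).
(* The modulus of 'Z_(n.*2): it is n.*2 only when n > 0. *)
Local Notation N := (Zp_trunc n.*2).+2.

Definition U6zeta : algC := sval (C_prim_root_exists (ltn0Sn N.-1)).

Lemma U6zeta_prim : N.-primitive_root U6zeta.
Proof. by rewrite /U6zeta; case: C_prim_root_exists. Qed.

Definition zexp (i : Zn) : algC := U6zeta ^+ val i.

Lemma zexpD i j : zexp (i + j) = zexp i * zexp j.
Proof. by rewrite /zexp -exprD /= (prim_expr_mod U6zeta_prim). Qed.

Lemma zexp0 : zexp 0 = 1.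
Proof. exact: expr0. Qed.

Lemma zexp_order i : zexp i ^+ N = 1.
Proof. by rewrite /zexp exprAC (prim_expr_order U6zeta_prim) expr1n. Qed.

Lemma zexp_eq1 i : (zexp i == 1) = (i == 0).
Proof.
rewrite /zexp -(prim_order_dvd U6zeta_prim); apply/idP/eqP => [|-> //].
case: i => [[|i] lt_iN] /= dvd_iN; first exact: val_inj.
by have := dvdn_leq (ltn0Sn i) dvd_iN; rewrite leqNgt lt_iN.
Qed.

Lemma zexp_neq0 i : zexp i != 0.
Proof. by apply: contra_eq_neq (zexp_order i) => ->; rewrite expr0n eq_sym oner_eq0. Qed.

Lemma sum_zexp i : \sum_(j < N) zexp i ^+ j = if i == 0 then N%:R else 0.
Proof. by rewrite sum_expr_unity ?zexp_order // zexp_eq1. Qed.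

Definition U6char (g : U6 n) : algC := zexp g.1.

Lemma U6charM : {morph U6char : x y / (x * y)%g >-> x * y}.
Proof. move=> x y; exact: zexpD. Qed.

Lemma U6char1 : U6char 1%g = 1.
Proof. exact: zexp0. Qed.

Lemma U6char_faithful : {in <[U6a n]>%g, forall g, (U6char g == 1) = (g == 1%g)}.
Proof.
move=> [i e] /U6_cycle_a /= ->; rewrite /U6char zexp_eq1 /=.
by apply/eqP/eqP => [-> | [->]].
Qed.

End U6LinearCharacter.

Section U6CayleySpectrum.
Variables (n : nat) (P : pred 'Z_(n.*2)) (S : {set U6 n}).
Hypothesis memS : forall g, (g \in S) = P g.1.
Local Notation Zn := 'Z_(n.*2).
Local Notation N := (Zp_trunc n.*2).+2.

Definition cayley_lambda (j : nat) : algC := 3%:R * \sum_(m : Zn) (P m)%:R * zexp m ^+ j.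

Lemma cayley_adjE i k : cayley_adj S i k = (P ((enum_val k).1 - (enum_val i).1))%:R.
Proof. by rewrite /cayley_adj mxE memS. Qed.

Lemma cayley_lambda_shift c j :
  \sum_(g : U6 n) (P (g.1 - c))%:R * zexp g.1 ^+ j = zexp c ^+ j * cayley_lambda j.
Proof.
rewrite (sum_U6_fst (fun i => (P (i - c))%:R * zexp i ^+ j)) (reindex_inj (addIr c)) /=.
rewrite mulrCA; congr (_ * _); rewrite mulr_sumr; apply: eq_bigr => m _.
by rewrite addrK zexpD exprMn; ring.
Qed.

Lemma cayley_lambda_reflect c j :
  \sum_(g : U6 n) (P (c - g.1))%:R * zexp (- g.1) ^+ j = zexp (- c) ^+ j * cayley_lambda j.
Proof.
have c_sub_inj : injective (fun m : Zn => c - m) by move=> x y /addrI /oppr_inj.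
rewrite (sum_U6_fst (fun i => (P (c - i))%:R * zexp (- i) ^+ j)) (reindex_inj c_sub_inj) /=.
rewrite mulrCA; congr (_ * _); rewrite mulr_sumr; apply: eq_bigr => m _.
by rewrite opprB addrC subrK addrC zexpD exprMn; ring.
Qed.

Lemma eigenvalue_cayley_lambda j : eigenvalue (cayley_adj S) (cayley_lambda j).
Proof.
apply/eigenvalueP; exists (\row_k zexp (- (enum_val k).1) ^+ j).
  apply/rowP => k; rewrite !mxE; under eq_bigr do rewrite cayley_adjE mxE mulrC.
  rewrite (sum_enum_val (fun g => (P ((enum_val k).1 - g.1))%:R * zexp (- g.1) ^+ j)).
  by rewrite cayley_lambda_reflect mulrC.
apply/eqP => /rowP /(_ (enum_rank 1%g)); rewrite !mxE => /eqP.
by rewrite expf_eq0 (negPf (zexp_neq0 _)) andbF.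
Qed.

Definition fourier (w : U6 n -> algC) (j : nat) : algC := \sum_g w g * zexp g.1 ^+ j.

Lemma fourier_inversion w i :
  \sum_(j < N) fourier w j * zexp (- i) ^+ j = N%:R * \sum_(e : 'Z_3) w (i, e).
Proof.
rewrite /fourier; under eq_bigr do rewrite mulr_suml.
rewrite exchange_big /=.
transitivity (\sum_g w g * (if g.1 - i == 0 then N%:R else 0)).
  apply: eq_bigr => g _; rewrite -sum_zexp mulr_sumr; apply: eq_bigr => j _.
  by rewrite zexpD exprMn mulrA.
rewrite sum_U6 (bigD1 i) //= subrr eqxx mulr_sumr [X in _ + X]big1 ?addr0.
  by apply: eq_bigr => e _; rewrite mulrC.
move=> i' /negPf ne_i'i; apply: big1 => e _.
by rewrite subr_eq0 ne_i'i mulr0.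
Qed.

Lemma fourier_eigen w x j :
    (forall h, x * w h = \sum_g w g * (P (h.1 - g.1))%:R) ->
  x * fourier w j = cayley_lambda j * fourier w j.
Proof.
move=> eigen_w; rewrite /fourier mulr_sumr.
under eq_bigr do rewrite mulrA eigen_w mulr_suml.
rewrite exchange_big mulr_sumr; apply: eq_bigr => g _.
under eq_bigr do rewrite -mulrA.
by rewrite -mulr_sumr cayley_lambda_shift; ring.
Qed.

(* For x outside {0} and the cayley_lambda j, an eigenvector has vanishing
   Fourier coefficients, hence vanishing sums over the fibres {i} x 'Z_3; but
   x times the eigenvector is a combination of these fibre sums. *)
Lemma eigenvalue_cayleyP x :
  eigenvalue (cayley_adj S) x -> x = 0 \/ exists j : 'I_N, x = cayley_lambda j.
Proof.
case/eigenvalueP => v eigen_v v_neq0; pose w g := v 0 (enum_rank g).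
have eigen_w h : x * w h = \sum_g w g * (P (h.1 - g.1))%:R.
  have /rowP/(_ (enum_rank h)) := eigen_v; rewrite !mxE => <-.
  rewrite -(sum_enum_val (fun g => w g * (P (h.1 - g.1))%:R)).
  by apply: eq_bigr => k _; rewrite cayley_adjE enum_rankK /w enum_valK.
have [-> | x_neq0] := eqVneq x 0; [by left | right].
case: (pickP (fun j : 'I_N => x == cayley_lambda j)) => [j /eqP -> | x_neq_lambda].
  by exists j.
have fourier0 (j : 'I_N) : fourier w j = 0.
  apply/eqP; have /eqP := fourier_eigen j eigen_w.
  by rewrite -subr_eq0 -mulrBl mulf_eq0 subr_eq0 x_neq_lambda.
have fibre0 i : \sum_(e : 'Z_3) w (i, e) = 0.
  have := fourier_inversion w i; rewrite big1 => [/esym/eqP | j _].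
    by rewrite mulf_eq0 pnatr_eq0 => /orP[// | /eqP].
  by rewrite fourier0 mul0r.
case/eqP: v_neq0; apply/rowP => k; rewrite mxE.
apply/eqP; rewrite -(mulrI_eq0 _ (mulfI x_neq0)) /w -{1}(enum_valK k) eigen_w sum_U6.
apply/eqP/big1 => i _ /=; under eq_bigr do rewrite mulrC.
by rewrite -mulr_sumr fibre0 mulr0.
Qed.

End U6CayleySpectrum.

Section U6ConnectionSet.
Variables (n : nat) (R H : {set 'I_n}).
Local Notation Zn := 'Z_(n.*2).
Local Notation a := (U6a n).
Local Notation b := (U6b n).

Definition U6_S1 : {set U6 n} :=
    ([set a ^+ (2 * r)%N | r : 'I_n in R] :|: [set a ^+ (2 * r)%N * b | r : 'I_n in R]
      :|: [set a ^- (2 * r)%N * b ^+ 2 | r : 'I_n in R])%g.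
Definition U6_S2 : {set U6 n} :=
    ([set a ^+ (2 * h + 1)%N | h : 'I_n in H] :|: [set a ^+ (2 * h + 1)%N * b | h : 'I_n in H]
      :|: [set a ^+ (2 * h + 1)%N * b ^+ 2 | h : 'I_n in H])%g.
Definition U6_SR : {set U6 n} := [set (a ^+ (2 * r)%N)%g | r : 'I_n in R].
Definition U6_SH : {set U6 n} := [set (a ^+ (2 * h + 1)%N)%g | h : 'I_n in H].

Definition U6_evens : {set Zn} := [set (2 * r)%N%:R | r : 'I_n in R].
Definition U6_odds : {set Zn} := [set (2 * h + 1)%N%:R | h : 'I_n in H].

Lemma U6_SRSH_sub_cycle : U6_SR :|: U6_SH \subset <[a]>%g.
Proof. by apply/subsetP => g /setUP[] /imsetP[r _ ->]; exact: mem_cycle. Qed.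

Lemma mem_fibre_imset (c : 'Z_3) (A : {set Zn}) (g : U6 n) :
  (g \in [set (i, c) | i in A]) = (g.2 == c) && (g.1 \in A).
Proof.
apply/imsetP/andP => [[i iA ->] | [/eqP g2 g1A]]; first by rewrite eqxx.
by exists g.1; rewrite // -g2; case: (g).
Qed.

Lemma mem_fibre_imsetN (c : 'Z_3) (A : {set Zn}) (g : U6 n) :
  (g \in [set (- i, c) | i in A]) = (g.2 == c) && (- g.1 \in A).
Proof.
apply/imsetP/andP => [[i iA ->] | [/eqP g2 g1A]]; first by rewrite eqxx opprK.
by exists (- g.1); rewrite // opprK -g2; case: (g).
Qed.

Lemma U6_S1E : U6_S1 = [set (i, 0) | i in U6_evens] :|: [set (i, 1) | i in U6_evens]
                     :|: [set (- i, 1 + 1) | i in U6_evens].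
Proof.
rewrite /U6_S1 /U6_evens -!imset_comp.
congr (_ :|: _ :|: _); apply: eq_imset => r /=;
  by rewrite ?U6_expVa_b2 ?U6_expa_b ?U6_expa_b2 ?U6_expa.
Qed.

Lemma U6_S2E : U6_S2 = [set (i, 0) | i in U6_odds] :|: [set (i, 1) | i in U6_odds]
                     :|: [set (i, 1 + 1) | i in U6_odds].
Proof.
rewrite /U6_S2 /U6_odds -!imset_comp.
congr (_ :|: _ :|: _); apply: eq_imset => r /=;
  by rewrite ?U6_expa_b ?U6_expa_b2 ?U6_expa.
Qed.

Lemma U6_SRSHE : U6_SR :|: U6_SH = [set (i, 0) | i in U6_evens :|: U6_odds].
Proof.
rewrite /U6_SR /U6_SH /U6_evens /U6_odds imsetU -!imset_comp.
by congr (_ :|: _); apply: eq_imset => r /=; rewrite U6_expa.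
Qed.

Lemma cayley_lambda_U6_SRSH j :
  cayley_lambda (fun i => i \in U6_evens :|: U6_odds) j =
  3%:R * power_sum (@U6char n) (U6_SR :|: U6_SH) j.
Proof.
rewrite /cayley_lambda /power_sum U6_SRSHE big_imset /=; last by move=> i i' _ _ [].
by congr (_ * _); rewrite [RHS]big_mkcond; apply: eq_bigr => i _; case: ifP; rewrite ?mul1r ?mul0r.
Qed.

Lemma mem_U6_S2 g : (g \in U6_S2) = (g.1 \in U6_odds).
Proof.
rewrite U6_S2E !inE !mem_fibre_imset.
by case: (Z3_cases g.2) => ->; rewrite ?eqxx ?andbF ?orbF.
Qed.

Lemma odd_U6_evens i : i \in U6_evens -> odd (val i) = false.
Proof. by case/imsetP => r _ ->; rewrite odd_Zp_nat oddM. Qed.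

Lemma odd_U6_odds i : i \in U6_odds -> odd (val i) = true.
Proof. by case/imsetP => h _ ->; rewrite odd_Zp_nat oddD oddM. Qed.

Lemma mem_U6_S1 g : (g \in U6_S1) =
  [|| (g.2 == 0) && (g.1 \in U6_evens), (g.2 == 1) && (g.1 \in U6_evens)
    | (g.2 == 1 + 1) && (- g.1 \in U6_evens)].
Proof. by rewrite U6_S1E !inE mem_fibre_imsetN !mem_fibre_imset orbA. Qed.

Hypothesis S_sym : ((U6_S1 :|: U6_S2)^-1)%g = U6_S1 :|: U6_S2.

Lemma U6_evensN i : i \in U6_evens -> - i \in U6_evens.
Proof.
move=> Ei; have : ((i, 0) : U6 n) \in U6_S1 :|: U6_S2.
  by rewrite inE mem_U6_S1 eqxx Ei.
rewrite -memV_invg S_sym.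
change ((- i, - U6sg i 0) \in U6_S1 :|: U6_S2 -> - i \in U6_evens).
rewrite U6sg0 oppr0 inE mem_U6_S1 mem_U6_S2 /= orbF.
by case/orP => [// | /odd_U6_odds]; rewrite odd_ZpN (odd_U6_evens Ei).
Qed.

Lemma mem_U6_S g : (g \in U6_S1 :|: U6_S2) = (g.1 \in U6_evens :|: U6_odds).
Proof.
have evensN : (- g.1 \in U6_evens) = (g.1 \in U6_evens).
  by apply/idP/idP => /U6_evensN; rewrite ?opprK.
rewrite inE mem_U6_S1 mem_U6_S2 inE evensN.
by case: (Z3_cases g.2) => ->; rewrite /= ?andbF ?orbF.
Qed.

End U6ConnectionSet.

Section U6CharacterPsi.
Variables (n k : nat).
Local Notation Zn := 'Z_(n.*2).

Lemma sum_U6psi_fibre (c : Zn) : \sum_(e : 'Z_3) U6psi k ((c, e) : U6 n) = 0.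
Proof. by rewrite !big_ord_recl big_ord0 /U6psi /=; case: ifP => _ //; ring. Qed.

(* Right multiplication permutes each fibre {i} x 'Z_3, on whose sum psi_k vanishes. *)
Lemma char_sq_U6psi_fibred (A : {set U6 n}) :
  (forall g, (g \in A) = ((g.1, 0) \in A)) -> char_sq (U6psi k) A = 0.
Proof.
move=> fibredA; apply: big1 => x _; rewrite big_mkcond sum_U6 /=.
apply: big1 => i _; rewrite (eq_bigr (fun e => ((i, 0) \in A)%:R * U6psi k (x * (i, e))%g)).
  have fibre0 : \sum_(e : 'Z_3) U6psi k (x * (i, e))%g = 0.
    transitivity (\sum_(e : 'Z_3) U6psi k ((x.1 + i, e) : U6 n)); last exact: sum_U6psi_fibre.
    by rewrite [RHS](reindex_inj (addrI (U6sg i x.2))).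
  by rewrite -mulr_sumr fibre0 mulr0.
by move=> e _; rewrite fibredA; case: ifP; rewrite ?mul1r ?mul0r.
Qed.

End U6CharacterPsi.

Theorem theorem4p7 (n : nat) (hn : (0 < n)%N) (R H : {set 'I_n}) :
  let a : U6 n := U6a n in
  let b : U6 n := U6b n in
  let S1 : {set U6 n} :=
    ([set a ^+ (2 * r)%N | r : 'I_n in R] :|: [set a ^+ (2 * r)%N * b | r : 'I_n in R]
      :|: [set a ^- (2 * r)%N * b ^+ 2 | r : 'I_n in R])%g in
  let S2 : {set U6 n} :=
    ([set a ^+ (2 * h + 1)%N | h : 'I_n in H] :|: [set a ^+ (2 * h + 1)%N * b | h : 'I_n in H]
      :|: [set a ^+ (2 * h + 1)%N * b ^+ 2 | h : 'I_n in H])%g in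
  let S : {set U6 n} := S1 :|: S2 in
  let SR : {set U6 n} := [set (a ^+ (2 * r)%N)%g | r : 'I_n in R] in
  let SH : {set U6 n} := [set (a ^+ (2 * h + 1)%N)%g | h : 'I_n in H] in
  (1 \notin S)%g -> (S^-1)%g = S ->
  (integral_graph (cayley_adj S) <->
     inB <[a]>%g (SR :|: SH) /\
     (forall k : 'I_n, exists m : int,
        (2 * char_sq (@U6psi n k) S2 = (m%:~R) ^+ 2)%R)).
Proof.
move=> a b S1 S2 S SR SH _ S_sym.
have memS := mem_U6_S S_sym.
have lambdaE := cayley_lambda_U6_SRSH R H.
have psi_S2 (k : 'I_n) : exists m : int, 2 * char_sq (@U6psi n k) S2 = m%:~R ^+ 2.
  by exists 0; rewrite char_sq_U6psi_fibred ?mulr0 ?expr0n // => g; rewrite !mem_U6_S2.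
rewrite inBP; split=> [integral | [[_ closedX] _] x].
  do 2!split=> //; first exact: U6_SRSH_sub_cycle.
  apply: (power_sum_rat_cycle_closed (@U6charM n) (@U6char1 n) (@U6char_faithful n)).
    exact: U6_SRSH_sub_cycle.
  move=> j; have := integral _ (eigenvalue_cayley_lambda memS j).
  rewrite lambdaE => /(rpred_int_num Crat) rat_3ps.
  have nz3 : 3%:R != 0 :> algC by rewrite pnatr_eq0.
  by rewrite -[power_sum _ _ _](mulKf nz3) rpredM ?rpredV ?rpred_nat.
case/(eigenvalue_cayleyP memS) => [-> | [j ->]]; first exact: rpred0.
by rewrite lambdaE rpredM ?rpred_nat // (power_sum_int (@U6charM n) (@U6char1 n) _ closedX).
Qed.
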